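(* Assume $\Delta=0$. Let $\lambda_1,\lambda_2,\lambda_3\in K$ with $\lambda_ic_i\in N$ and $s_i':=s_i\nu_i$ where $\nu_i\in N$ corresponds to $\lambda_ic_i$. Then $s_1's_2'$ has order exactly $p$, $s_1's_3'$ has order exactly $q$, and $s_2's_3'$ has order exactly $r$.
   Context: Setting. Let $p,q,r\ge 3$ be integers and $W=W(p,q,r)$ the Coxeter group with generators $s_1,s_2,s_3$ and relations $s_i^2=1$, $(s_1s_2)^p=(s_1s_3)^q=(s_2s_3)^r=1$. Let $\alpha=4\cos^2(\pi k_1/p)$, $\beta=4\cos^2(\pi k_2/q)$, $\gamma=4\cos^2(\pi k_3/r)$ with $\gcd(k_1,p)=\gcd(k_2,q)=\gcd(k_3,r)=1$ (so $0<\alpha,\beta,\gamma<4$), and let $l,m\in\mathbb{C}$ with $lm=\gamma$. Let $K\subset\mathbb{C}$ be a field containing $\alpha,\beta,\gamma,l,m$, and $M$ a $3$-dimensional $K$-vector space with basis $(a_1,a_2,a_3)$. The reflection representation $R:W\to GL(M)$ with parameters $(\alpha,\beta,\gamma;l,m)$ is defined by: for $x=\lambda_1a_1+\lambda_2a_2+\lambda_3a_3$, $R(s_1)x=x-(2\lambda_1-\alpha\lambda_2-\beta\lambda_3)a_1$, $R(s_2)x=x-(-\lambda_1+2\lambda_2-l\lambda_3)a_2$, $R(s_3)x=x-(-\lambda_1-m\lambda_2+2\lambda_3)a_3$. Put $G=R(W)$ and write $s_i$ for $R(s_i)$ (then $s_1s_2,s_1s_3,s_2s_3$ have orders exactly $p,q,r$).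 Let $\Delta=8-2\alpha-2\beta-2\gamma-(\alpha l+\beta m)$; $R$ is reducible iff $\Delta=0$. Reducible setting. Assume $\Delta=0$. Put $b=(4-\gamma)a_1+(l+2)a_2+(m+2)a_3$; then the space of $G$-fixed vectors is $C_M(G)=Kb$ and $(b,a_2,a_3)$ is a basis of $M$. Let $N=N(G)$ be the subgroup of elements of $G$ acting trivially on $M/C_M(G)$. Each $\zeta\in N$ satisfies $\zeta(b)=b$, $\zeta(a_2)=a_2+\lambda b$, $\zeta(a_3)=a_3+\mu b$ for a unique $(\lambda,\mu)\in K^2$; the map $\zeta\mapsto(\lambda,\mu)$ is an injective group homomorphism $N\to (K^2,+)$, through which $N$ is identified with an additive subgroup of $K^2$ (and written additively). Put $c_1=(\alpha,\beta)$, $c_2=(-2,l)$, $c_3=(m,-2)\in K^2$. *)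

From HB Require Import structures.
From mathcomp Require Import all_boot all_order all_algebra.
Set Implicit Arguments. Unset Strict Implicit. Unset Printing Implicit Defensive.
Import Order.TTheory GRing.Theory Num.Theory.
Local Open Scope ring_scope.

Section Defs.
Variable C : numClosedFieldType.

(* 4 cos^2 (pi k / p), computed as (w^k + w^-k)^2 with w = p.-root (-1) = e^{i pi/p}. *)
Definition four_cos2 (k p : nat) : C :=
  let w := p.-root (-1 : C) in (w ^+ k + (w ^+ k)^-1) ^+ 2.

Definition vec3 (x1 x2 x3 : C) : 'cV[C]_3 := \col_i [:: x1; x2; x3]`_i.
Definition row3 (x1 x2 x3 : C) : 'rV[C]_3 := \row_j [:: x1; x2; x3]`_j.

Definition a1 : 'cV[C]_3 := vec3 1 0 0.
Definition a2 : 'cV[C]_3 := vec3 0 1 0.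
Definition a3 : 'cV[C]_3 := vec3 0 0 1.

(* Reflection matrices (acting on column vectors): R(s_i) x = x - f_i(x) a_i *)
Definition refl1 (alpha beta : C) : 'M[C]_3 :=
  1%:M - a1 *m row3 2 (- alpha) (- beta).
Definition refl2 (l : C) : 'M[C]_3 :=
  1%:M - a2 *m row3 (-1) 2 (- l).
Definition refl3 (m : C) : 'M[C]_3 :=
  1%:M - a3 *m row3 (-1) (- m) 2.

Definition refl (alpha beta l m : C) (i : 'I_3) : 'M[C]_3 :=
  match val i with 0%N => refl1 alpha beta | 1%N => refl2 l | _ => refl3 m end.

Inductive inG (alpha beta l m : C) : 'M[C]_3 -> Prop :=
| inG1 : inG alpha beta l m 1%:M
| inGs (i : 'I_3) (g : 'M[C]_3) :
    inG alpha beta l m g -> inG alpha beta l m (refl alpha beta l m i *m g).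

Definition Delta (alpha beta gamma l m : C) : C :=
  8 - 2 * alpha - 2 * beta - 2 * gamma - (alpha * l + beta * m).

Definition bvec (gamma l m : C) : 'cV[C]_3 := vec3 (4 - gamma) (l + 2) (m + 2).

Definition corresponds (gamma l m : C) (nu : 'M[C]_3) (v : C * C) : Prop :=
  let b := bvec gamma l m in
  [/\ nu *m b = b, nu *m a2 = a2 + v.1 *: b & nu *m a3 = a3 + v.2 *: b].

Definition in_N (alpha beta gamma l m : C) (nu : 'M[C]_3) (v : C * C) : Prop :=
  inG alpha beta l m nu /\ corresponds gamma l m nu v.

Definition has_order (g : 'M[C]_3) (n : nat) : Prop :=
  (0 < n)%N /\ g ^+ n = 1 /\ forall k : nat, (0 < k < n)%N -> g ^+ k <> 1.

Definition scal2 (t : C) (v : C * C) : C * C := (t * v.1, t * v.2).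
End Defs.

From HB Require Import structures.
From mathcomp Require Import all_boot all_order all_algebra.
From mathcomp Require Import ring lra.
Set Implicit Arguments. Unset Strict Implicit. Unset Printing Implicit Defensive.
Import Order.TTheory GRing.Theory Num.Theory.
Local Open Scope ring_scope.

(* Write w = p.-root (-1), the root of y^p = -1 of largest real part in the
   closed upper half plane. Then alpha = 4 cos^2 (pi k / p) is z + z^-1 + 2
   with z = w^(2k), and a rotation argument shows that w is a primitive 2p-th
   root of unity, so z is a primitive p-th root of unity.
   In the basis (b, a2, a3) the elements of N are unitriangular and act
   trivially on M / Kb, so s_i' s_j' acts on M / Kb exactly as s_i s_j does:
   by a 2x2 matrix of trace z + z^-1 and determinant 1 (using Delta = 0 and
   l m = gamma). A 3x3 matrix fixing b with such a quotient action is
   annihilated by (X - 1)(X - z)(X - z^-1), which divides X^p - 1, and has the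
   eigenvalue z; hence its order is exactly p. *)

(* The real elements of a numeric closed field form a real field, on which
   nra decides the unit-circle inequalities used below. *)
Section RealSubfield.
Variable C : numClosedFieldType.

Definition Creal_sub := {x : C | x \is Num.real}.
HB.instance Definition _ := [isSub for (@sval C _ : Creal_sub -> C)].
HB.instance Definition _ := [Choice of Creal_sub by <:].
HB.instance Definition _ := [SubChoice_isSubIntegralDomain of Creal_sub by <:].
HB.instance Definition _ := [SubIntegralDomain_isSubField of Creal_sub by <:].

Definition Creal_sub_le (x y : Creal_sub) := val x <= val y.
Definition Creal_sub_lt (x y : Creal_sub) := val x < val y.
Definition Creal_sub_norm (x : Creal_sub) := if Creal_sub_le 0 x then x else - x.

Lemma Creal_sub_addr_ge0 x y :
  Creal_sub_le 0 x -> Creal_sub_le 0 y -> Creal_sub_le 0 (x + y).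
Proof. exact: addr_ge0. Qed.

Lemma Creal_sub_mulr_ge0 x y :
  Creal_sub_le 0 x -> Creal_sub_le 0 y -> Creal_sub_le 0 (x * y).
Proof. exact: mulr_ge0. Qed.

Lemma Creal_sub_le0_anti x : Creal_sub_le 0 x -> Creal_sub_le x 0 -> x = 0.
Proof.
rewrite /Creal_sub_le => x_ge0 x_le0.
by apply/val_inj/eqP; rewrite eq_le x_ge0 x_le0.
Qed.

Lemma Creal_sub_subr_ge0 x y : Creal_sub_le 0 (y - x) = Creal_sub_le x y.
Proof. exact: subr_ge0. Qed.

Lemma Creal_sub_le0_total x : Creal_sub_le 0 x || Creal_sub_le x 0.
Proof. by rewrite -realE; case: x. Qed.

Lemma Creal_sub_normN x : Creal_sub_norm (- x) = Creal_sub_norm x.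
Proof.
rewrite /Creal_sub_norm /Creal_sub_le /= oppr_ge0.
case: (real_ltgtP (valP x) (real0 C)) => [_|_|x0]; rewrite ?opprK //.
have -> : x = 0 by apply: val_inj; exact: x0.
exact: oppr0.
Qed.

Lemma Creal_sub_ge0_norm x : Creal_sub_le 0 x -> Creal_sub_norm x = x.
Proof. by rewrite /Creal_sub_norm => ->. Qed.

Lemma Creal_sub_lt_def x y : Creal_sub_lt x y = (y != x) && Creal_sub_le x y.
Proof. by rewrite /Creal_sub_lt /Creal_sub_le lt_def (inj_eq val_inj). Qed.

HB.instance Definition _ := Num.IntegralDomain_isLeReal.Build Creal_sub
  Creal_sub_addr_ge0 Creal_sub_mulr_ge0 Creal_sub_le0_anti Creal_sub_subr_ge0
  Creal_sub_le0_total Creal_sub_normN Creal_sub_ge0_norm Creal_sub_lt_def.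

Definition ReC (z : C) : Creal_sub := exist _ ('Re z) (Creal_Re z).
Definition ImC (z : C) : Creal_sub := exist _ ('Im z) (Creal_Im z).

Lemma unit_ReC_ImC (z : C) : `|z| = 1 -> ReC z ^+ 2 + ImC z ^+ 2 = 1.
Proof.
by move=> z1; apply: val_inj; rewrite /= -normC2_Re_Im z1 expr1n.
Qed.

End RealSubfield.

Section UnitCircle.
Variable R : realFieldType.
Implicit Types a b c s : R.

Lemma unit_vec_Re_gtN1 a b : a ^+ 2 + b ^+ 2 = 1 -> 0 < b -> -1 < a.
Proof. by move=> ab1 b_gt0; nra. Qed.

Lemma unit_vec_dot_gt a b c s : a ^+ 2 + b ^+ 2 = 1 -> c ^+ 2 + s ^+ 2 = 1 ->
  0 < s -> 0 < b -> c < a -> c < c * a + s * b.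
Proof.
move=> ab1 cs1 s_gt0 b_gt0 ca.
have sb_gt0 : 0 < s * b by exact: mulr_gt0.
have [c_ge0|c_lt0] := lerP 0 c; last first.
  have ca1 : 0 <= c * (a - 1) by nra.
  by lra.
have bs : b < s by nra.
have c_le1 : c <= 1 by nra.
have cb : c * b < s * (1 + a) by nra.
have cb2 : c * ((1 - a) * (1 + a)) < s * b * (1 + a).
  by rewrite (_ : (1 - a) * (1 + a) = b ^+ 2); nra.
have a_gtN1 : 0 < 1 + a by nra.
by move: cb2; rewrite mulrA ltr_pM2r // => ?; lra.
Qed.

Lemma unit_vec_cross_lt0 a b c s : a ^+ 2 + b ^+ 2 = 1 -> c ^+ 2 + s ^+ 2 = 1 ->
  0 < s -> 0 <= b -> b * c - a * s < 0 -> (a = 1 /\ b = 0) \/ (c < a /\ 0 < b).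
Proof.
move=> ab1 cs1 s_gt0 b_ge0 cross.
have ca : c < a.
  rewrite ltNge; apply/negP => ac.
  have asc : a * s <= c * s by rewrite ler_pM2r.
  have [c_gt0|c_le0] := ltrP 0 c.
  - have bs : b < s by rewrite -(ltr_pM2l c_gt0); lra.
    have ac2 : c ^+ 2 < a ^+ 2 by nra.
    have a_lt_Nc : a < - c by nra.
    by nra.
  - have ac2 : c ^+ 2 <= a ^+ 2 by nra.
    have bs : b <= s by nra.
    have csb : c * s <= c * b by nra.
    by nra.
have [b_gt0|b_le0] := ltrP 0 b; first by right.
have b0 : b = 0 by apply/eqP; rewrite eq_le b_le0 b_ge0.
left; split => //.
have a_gtN1 : -1 < a by nra.
have /eqP : a ^+ 2 = 1 by rewrite -ab1 b0 expr0n addr0.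
by rewrite sqrf_eq1 => /orP[/eqP // | /eqP aN1]; move: a_gtN1; rewrite aN1 ltxx.
Qed.

End UnitCircle.

Section UnitCircleC.
Variable C : numClosedFieldType.
Implicit Types x w y : C.

Lemma unit_Re_gtN1 y : `|y| = 1 -> 0 < 'Im y -> -1 < 'Re y.
Proof. by move=> y1 Im_y_gt0; exact: (unit_vec_Re_gtN1 (unit_ReC_ImC y1)). Qed.

Lemma Re_mul_conj_gt x w : `|x| = 1 -> `|w| = 1 -> 0 < 'Im w -> 0 < 'Im x ->
  'Re w < 'Re x -> 'Re w < 'Re (w * x^*).
Proof.
move=> x1 w1 Im_w_gt0 Im_x_gt0 Re_wx.
rewrite ReM Re_conj Im_conj mulrN opprK.
exact: (unit_vec_dot_gt (unit_ReC_ImC x1) (unit_ReC_ImC w1)).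
Qed.

Lemma Im_mul_conj_lt0 x w : `|x| = 1 -> `|w| = 1 -> 0 < 'Im w -> 0 <= 'Im x ->
  'Im (x * w^*) < 0 -> x = 1 \/ 'Re w < 'Re x /\ 0 < 'Im x.
Proof.
move=> x1 w1 Im_w_gt0 Im_x_ge0.
rewrite ImM Re_conj Im_conj mulrN addrC mulrC => cross.
have [[Re_x1 Im_x0]|] := unit_vec_cross_lt0 (unit_ReC_ImC x1) (unit_ReC_ImC w1)
  Im_w_gt0 Im_x_ge0 cross; last by right.
left; rewrite [x]Crect.
by move: Re_x1 Im_x0 => [->] [->]; rewrite mulr0 addr0.
Qed.

End UnitCircleC.

Lemma nat_sign_change (P : pred nat) b : P 0%N -> ~~ P b -> exists k, P k /\ ~~ P k.+1.
Proof.
elim: b => [-> //|b IHb] P0 Pb1.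
by have [Pb|/IHb] := boolP (P b); [exists b | apply].
Qed.

Lemma unity_root_neq1_exists (C : numClosedFieldType) (e : nat) :
  (1 < e)%N -> exists2 t : C, t ^+ e = 1 & t != 1.
Proof.
move=> e_gt1.
have [|t /eqP] := closed_rootP (\poly_(i < e) (1 : C)) _.
  by rewrite size_poly_eq ?oner_eq0 // -(subnKC e_gt1).
rewrite horner_poly (eq_bigr _ (fun _ _ => mul1r _)) => sum_t0.
exists t; first by apply/eqP; rewrite -subr_eq0 subrX1 sum_t0 mulr0.
apply/eqP => t1; move: sum_t0; rewrite t1 (eq_bigr _ (fun _ _ => expr1n _ _)).
by rewrite sumr_const card_ord => /eqP; rewrite pnatr_eq0 -leqn0 leqNgt ltnW.
Qed.

Lemma exprN1_order (F : fieldType) (x : F) (n d : nat) :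
  (-1 : F) != 1 -> x ^+ n = -1 -> d.-primitive_root x -> (d %| 2 * n)%N ->
  exists m e, [/\ d = (2 * m)%N, n = (m * e)%N, odd e & x ^+ m = -1].
Proof.
move=> N1_neq1 xn d_prim d_dvd.
have d_ndvd_n : ~~ (d %| n)%N by rewrite (prim_order_dvd d_prim) xn.
have d_even : ~~ odd d.
  apply: contra d_ndvd_n => d_odd.
  by rewrite -(Gauss_dvdr _ (_ : coprime d 2)) ?coprimen2 // mulnC.
set m := d./2; exists m, (n %/ m)%N.
have d_double : d = (2 * m)%N.
  by rewrite -[LHS]odd_double_half (negbTE d_even) mul2n.
have m_gt0 : (0 < m)%N.
  by rewrite -(ltn_pmul2l (isT : (0 < 2)%N)) -d_double (prim_order_gt0 d_prim).
have n_eq : n = (m * (n %/ m))%N.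
  by rewrite mulnC divnK //; move: d_dvd; rewrite d_double dvdn_pmul2l.
split => //.
- apply: contraR d_ndvd_n => e_even.
  rewrite n_eq d_double -[(n %/ m)%N]odd_double_half (negbTE e_even) add0n.
  by rewrite -mul2n mulnCA mulnA dvdn_mulr.
- have /eqP : (x ^+ m) ^+ 2 = 1 by rewrite -exprM mulnC -d_double prim_expr_order.
  rewrite sqrf_eq1 => /orP[/eqP xm1|/eqP //].
  have := dvdn_leq m_gt0 (_ : (d %| m)%N); rewrite (prim_order_dvd d_prim) xm1 eqxx.
  by rewrite d_double -{2}(mul1n m) leq_pmul2r // => /(_ isT).
Qed.

Section RootN1.
Variables (C : numClosedFieldType) (n : nat).
Hypothesis n_gt1 : (1 < n)%N.
Local Notation w := (n.-root (-1 : C)).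
Implicit Types x y : C.

Let n_gt0 : (0 < n)%N := ltnW n_gt1.
Let N1_neq1 : (-1 : C) != 1. Proof. by rewrite eqNr oner_eq0. Qed.
Let wn : w ^+ n = -1. Proof. exact: rootCK. Qed.

Lemma rootN1_norm y : y ^+ n = -1 -> `|y| = 1.
Proof.
move=> yn; have /eqP : `|y| ^+ n = 1 by rewrite -normrX yn normrN1.
by rewrite pexpr_eq1 // => /eqP.
Qed.

Let w1 : `|w| = 1. Proof. exact: rootN1_norm. Qed.

Lemma Re_rootN1_max y : y ^+ n = -1 -> 'Re y <= 'Re w.
Proof.
move=> yn; have [Im_y_ge0|Im_y_lt0] := real_leP (real0 C) (Creal_Im y).
  exact: rootC_Re_max.
rewrite -Re_conj; apply: rootC_Re_max => //; first by rewrite -rmorphXn yn rmorphN1.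
by rewrite Im_conj oppr_ge0 ltW.
Qed.

Lemma rootN1_real y : y ^+ n = -1 -> 'Im y = 0 -> y = -1 /\ odd n.
Proof.
move=> yn /Creal_ImP y_real.
have /eqP : y ^+ 2 = 1 by rewrite -real_normK // rootN1_norm // expr1n.
rewrite sqrf_eq1 => /orP[/eqP y1|/eqP yN1].
  by move: yn; rewrite y1 expr1n => /eqP; rewrite eq_sym (negbTE N1_neq1).
split => //; move: yn; rewrite yN1 -signr_odd.
by case: (odd n) => // /eqP; rewrite expr0 eq_sym (negbTE N1_neq1).
Qed.

Lemma rootN1_rotation x (k : nat) : `|x| = 1 -> x ^+ n = - (-1) ^+ k ->
  0 < 'Im w -> 0 <= 'Im x -> 'Im (x * w^*) < 0 -> x = 1 /\ odd k.
Proof.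
move=> x1 xn Im_w_gt0 Im_x_ge0 cross.
have [x_1|[Re_wx Im_x_gt0]] := Im_mul_conj_lt0 x1 w1 Im_w_gt0 Im_x_ge0 cross.
  split => //; move: xn; rewrite x_1 expr1n -signr_odd.
  by case: (odd k) => // /eqP; rewrite expr0 eq_sym (negbTE N1_neq1).
exfalso; move: xn; rewrite -signr_odd; case: (odd k) => xn.
  have zn : (w * x^*) ^+ n = -1 by rewrite exprMn -rmorphXn xn opprK rmorph1 mulr1.
  have Re_wz := Re_mul_conj_gt x1 w1 Im_w_gt0 Im_x_gt0 Re_wx.
  by have := lt_le_trans Re_wz (Re_rootN1_max zn); rewrite ltxx.
rewrite expr0 in xn.
by have := lt_le_trans Re_wx (Re_rootN1_max xn); rewrite ltxx.
Qed.

Let conj_w_mul : w^* * w = 1.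
Proof. by rewrite mulrC -normCK w1 expr1n. Qed.

Lemma Im_rootN1_gt0 y : y ^+ n = -1 -> 0 < 'Im y -> 0 < 'Im w.
Proof.
move=> yn Im_y_gt0; rewrite lt_def Im_rootC_ge0 // andbT.
apply/eqP => /(rootN1_real wn) [w_N1 _].
have := lt_le_trans (unit_Re_gtN1 (rootN1_norm yn) Im_y_gt0) (Re_rootN1_max yn).
by rewrite w_N1 raddfN /= (Creal_ReP _ (rpred1 _)) ltxx.
Qed.

(* Rotate y clockwise by arg w until the imaginary part changes sign, which
   happens before n steps since y * w^-n = -y; at that step the maximality of
   Re w forces the rotated point to be 1. *)
Lemma rootN1_exp_odd_Im_gt0 y : y ^+ n = -1 -> 0 < 'Im y ->
  exists2 i, odd i & y = w ^+ i.
Proof.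
move=> yn Im_y_gt0; have Im_w_gt0 := Im_rootN1_gt0 yn Im_y_gt0.
pose s k := y * w^* ^+ k.
have conj_wn : w^* ^+ n = -1 by rewrite -rmorphXn wn rmorphN1.
have s_norm k : `|s k| = 1.
  by rewrite normrM normrX norm_conjC w1 expr1n mulr1 rootN1_norm.
have s_exp k : s k ^+ n = - (-1) ^+ k.
  by rewrite exprMn yn -exprM mulnC exprM conj_wn mulN1r.
have s_sign_change : ~~ (0 <= 'Im (s n)).
  by rewrite /s conj_wn mulrN1 raddfN /= oppr_ge0 -real_ltNge ?real0 ?Creal_Im.
have Im_s0_ge0 : 0 <= 'Im (s 0%N) by rewrite /s expr0 mulr1 ltW.
have [k [Im_sk_ge0 Im_sk1]] :=
  nat_sign_change (P := fun k => 0 <= 'Im (s k)) Im_s0_ge0 s_sign_change.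
have Im_sk1_lt0 : 'Im (s k * w^*) < 0.
  by rewrite -mulrA -exprSr real_ltNge ?real0 ?Creal_Im.
have [sk1 k_odd] := rootN1_rotation (s_norm k) (s_exp k) Im_w_gt0 Im_sk_ge0 Im_sk1_lt0.
exists k => //.
have : s k * w ^+ k = y by rewrite /s -mulrA -exprMn conj_w_mul expr1n mulr1.
by rewrite sk1 mul1r.
Qed.

Lemma rootN1_exp_odd y : y ^+ n = -1 -> exists2 i, odd i & y = w ^+ i.
Proof.
move=> yn.
case: (real_ltgtP (real0 C) (Creal_Im y)) => [|Im_y_lt0|/esym Im_y0].
- exact: rootN1_exp_odd_Im_gt0.
- have conj_yn : y^* ^+ n = -1 by rewrite -rmorphXn yn rmorphN1.
  have [|i i_odd conj_y] := rootN1_exp_odd_Im_gt0 conj_yn; first by rewrite Im_conj oppr_gt0.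
  have conj_w : w^* = w ^+ (2 * n).-1.
    apply: (mulIf (_ : w != 0)); first by rewrite -normr_eq0 w1 oner_eq0.
    by rewrite conj_w_mul -exprSr prednK ?muln_gt0 // mulnC exprM wn sqrrN expr1n.
  exists (i * (2 * n).-1)%N; first by rewrite oddM i_odd -[n]prednK // mulnS /= oddM.
  by rewrite -[y]conjCK conj_y rmorphXn /= conj_w -exprM mulnC.
- by have [-> n_odd] := rootN1_real yn Im_y0; exists n; rewrite ?expr1.
Qed.

(* If w had order 2m < 2n, then n = m e with e > 1 odd, and an m-th root of
   -t, for t a nontrivial e-th root of unity, would solve y^n = -1 without
   being an odd power of w. *)
Lemma prim_rootN1 : (2 * n).-primitive_root w.
Proof.
have w2n : w ^+ (2 * n) = 1 by rewrite mulnC exprM wn sqrrN expr1n.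
have n2_gt0 : (0 < 2 * n)%N by rewrite muln_gt0.
have [d d_prim d_dvd] := prim_order_exists n2_gt0 w2n.
have [m [e [d_eq n_eq e_odd wm]]] := exprN1_order N1_neq1 wn d_prim d_dvd.
have m_gt0 : (0 < m)%N by move: n_gt0; rewrite n_eq muln_gt0 => /andP[].
have [e1|e_gt1] := eqVneq e 1%N.
  by rewrite (_ : (2 * n)%N = d) // d_eq n_eq e1 muln1.
have {e_gt1} e_gt1 : (1 < e)%N by rewrite ltn_neqAle eq_sym e_gt1; case: (e) e_odd.
have [t te t_neq1] := unity_root_neq1_exists C e_gt1.
have rn : (m.-root (- t)) ^+ n = -1.
  by rewrite n_eq exprM rootCK // exprNn te mulr1 -signr_odd e_odd.
have [i i_odd ri] := rootN1_exp_odd rn.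
have := rootCK m_gt0 (- t); rewrite ri -exprM mulnC exprM wm -signr_odd i_odd.
by move/eqP; rewrite eqr_opp eq_sym (negbTE t_neq1).
Qed.

End RootN1.

Section Mx3.
Variable C : numClosedFieldType.
Implicit Types a b c x y z k : C.

Definition mx3 (a b c d e f g h i : C) : 'M[C]_3 :=
  \matrix_(i0 < 3, j0 < 3)
    nth 0 (nth [::] [:: [:: a; b; c]; [:: d; e; f]; [:: g; h; i]] i0) j0.

Local Ltac by_entries :=
  apply/matrixP => - [[|[|[|?]]] ?] [[|[|[|?]]] ?] //;
  rewrite !mxE ?big_ord_recr ?big_ord0 /= ?mxE /=; ring.

Lemma mx3_mul a b c d e f g h i a' b' c' d' e' f' g' h' i' :
  mx3 a b c d e f g h i *m mx3 a' b' c' d' e' f' g' h' i' =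
  mx3 (a*a' + b*d' + c*g') (a*b' + b*e' + c*h') (a*c' + b*f' + c*i')
      (d*a' + e*d' + f*g') (d*b' + e*e' + f*h') (d*c' + e*f' + f*i')
      (g*a' + h*d' + i*g') (g*b' + h*e' + i*h') (g*c' + h*f' + i*i').
Proof. by_entries. Qed.

Lemma mx3_add a b c d e f g h i a' b' c' d' e' f' g' h' i' :
  mx3 a b c d e f g h i + mx3 a' b' c' d' e' f' g' h' i' =
  mx3 (a+a') (b+b') (c+c') (d+d') (e+e') (f+f') (g+g') (h+h') (i+i').
Proof. by_entries. Qed.

Lemma mx3_scale k a b c d e f g h i :
  k *: mx3 a b c d e f g h i = mx3 (k*a) (k*b) (k*c) (k*d) (k*e) (k*f) (k*g) (k*h) (k*i).
Proof. by_entries. Qed.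

Lemma mx3_opp a b c d e f g h i :
  - mx3 a b c d e f g h i = mx3 (-a) (-b) (-c) (-d) (-e) (-f) (-g) (-h) (-i).
Proof. by_entries. Qed.

Lemma mx3_scalar x : x%:M = mx3 x 0 0 0 x 0 0 0 x.
Proof. by_entries. Qed.

Lemma mx3_1 : (1 : 'M[C]_3) = mx3 1 0 0 0 1 0 0 0 1.
Proof. by_entries. Qed.

Lemma mx3_0 : (0 : 'M[C]_3) = mx3 0 0 0 0 0 0 0 0 0.
Proof. by_entries. Qed.

Lemma vec3_add x y z x' y' z' : vec3 x y z + vec3 x' y' z' = vec3 (x+x') (y+y') (z+z').
Proof. by_entries. Qed.

Lemma vec3_scale k x y z : k *: vec3 x y z = vec3 (k*x) (k*y) (k*z).
Proof. by_entries. Qed.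

Lemma vec3_mul_row3 x y z a b c :
  vec3 x y z *m row3 a b c = mx3 (x*a) (x*b) (x*c) (y*a) (y*b) (y*c) (z*a) (z*b) (z*c).
Proof. by_entries. Qed.

Lemma row3_mul_mx3 x y z a b c d e f g h i :
  row3 x y z *m mx3 a b c d e f g h i = row3 (x*a+y*d+z*g) (x*b+y*e+z*h) (x*c+y*f+z*i).
Proof. by_entries. Qed.

Lemma row3_scale k x y z : k *: row3 x y z = row3 (k*x) (k*y) (k*z).
Proof. by_entries. Qed.

Lemma row3_eq0 x y z : (row3 x y z == 0) = [&& x == 0, y == 0 & z == 0].
Proof.
apply/eqP/and3P => [/rowP v0 | [/eqP-> /eqP-> /eqP->]].
  by split; apply/eqP; [have := v0 0 | have := v0 1 | have := v0 2]; rewrite !mxE.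
by apply/rowP => - [[|[|[|?]]] ?]; rewrite !mxE.
Qed.

Lemma mx3_cols a b c d e f g h i :
  mx3 a b c d e f g h i = vec3 a d g *m row3 1 0 0 + vec3 b e h *m row3 0 1 0
    + vec3 c f i *m row3 0 0 1.
Proof. by_entries. Qed.

End Mx3.

Lemma subr_scalar_mul (R : comPzRingType) (n : nat) (T : 'M[R]_n) (x y : R) :
  (T - x%:M) * (T - y%:M) = T * T - (x + y) *: T + (x * y)%:M.
Proof.
rewrite mulrBl !mulrBr -!mulmxE mul_mx_scalar mul_scalar_mx -scalar_mxM scalerDl.
set u := x *: T; set v := y *: T.
by rewrite opprB opprD !addrA addrAC; congr (_ + _); exact: addrAC.
Qed.

Lemma prim_root_neq1 (R : nzRingType) (z : R) (p : nat) :
  (1 < p)%N -> p.-primitive_root z -> z != 1.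
Proof. by move=> p_gt1 z_prim; rewrite -[z]expr1 -(prim_order_dvd z_prim) dvdn1 gtn_eqF. Qed.

Lemma prim_root_neq_inv (F : fieldType) (z : F) (p : nat) :
  (2 < p)%N -> p.-primitive_root z -> z != z^-1.
Proof.
move=> p_gt2 z_prim.
have z_neq0 : z != 0 by rewrite (prim_root_eq0 z_prim) gtn_eqF // (ltn_trans _ p_gt2).
rewrite -(inj_eq (mulfI z_neq0)) mulfV // -expr2 -(prim_order_dvd z_prim).
by rewrite gtnNdvd.
Qed.

Lemma prim_root_cubic_dvdp (F : fieldType) (z : F) (p : nat) : (2 < p)%N ->
  p.-primitive_root z ->
  ('X - 1) * (('X - z%:P) * ('X - z^-1%:P)) %| 'X^p - 1.
Proof.
move=> p_gt2 z_prim; have z_neq1 := prim_root_neq1 (ltnW p_gt2) z_prim.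
have zp : z ^+ p = 1 := prim_expr_order z_prim.
have := @uniq_roots_dvdp _ ('X^p - 1) [:: 1; z; z^-1].
rewrite !big_cons big_nil mulr1; apply.
  by rewrite /= !rootE !hornerE expr1n zp exprVn zp invr1 subrr eqxx.
rewrite uniq_rootsE /= !inE negb_or eq_sym z_neq1 eq_sym invr_eq1 z_neq1.
by rewrite (prim_root_neq_inv p_gt2 z_prim).
Qed.

Lemma eigenvector_prim_root_dvd (F : fieldType) (n : nat) (T : 'M[F]_n)
    (v : 'rV[F]_n) (z : F) (p k : nat) :
  v != 0 -> v *m T = z *: v -> p.-primitive_root z -> T ^+ k = 1 -> (p %| k)%N.
Proof.
move=> v_neq0 vT z_prim Tk.
have vTk : v *m T ^+ k = z ^+ k *: v.
  elim: k {Tk} => [|k IHk]; first by rewrite expr0 scale1r mulmx1.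
  by rewrite exprSr -mulmxE mulmxA IHk -scalemxAl vT scalerA exprSr.
move: vTk; rewrite Tk mulmx1 => /eqP; rewrite -subr_eq0 -{1}(scale1r v) -scalerBl.
by rewrite scaler_eq0 (negbTE v_neq0) orbF subr_eq0 eq_sym -(prim_order_dvd z_prim).
Qed.

Section OrderFix1.
Variables (C : numClosedFieldType) (z : C) (p : nat).
Hypotheses (p_gt2 : (2 < p)%N) (z_prim : p.-primitive_root z).
Variables (u1 u2 a b c d : C).
Hypotheses (trace_ad : a + d = z + z^-1) (det_ad : a * d - b * c = 1).
Local Notation T := (mx3 1 u1 u2 0 a b 0 c d).

Let z_neq0 : z != 0.
Proof. by rewrite (prim_root_eq0 z_prim) -lt0n (ltn_trans _ p_gt2). Qed.

Lemma mx3_fix1_annihilated :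
  horner_mx T (('X - 1) * (('X - z%:P) * ('X - z^-1%:P))) = 0.
Proof.
rewrite !rmorphM !rmorphB rmorph1 /= horner_mx_X !horner_mx_C subr_scalar_mul.
have -> : z * z^-1 = a * d - b * c by rewrite mulfV // det_ad.
rewrite -trace_ad -!mulmxE mx3_1 !mx3_scalar mx3_scale.
by rewrite !mx3_opp !mx3_mul !mx3_add mx3_mul mx3_0; congr mx3; ring.
Qed.

Lemma mx3_fix1_expr_order : T ^+ p = 1.
Proof.
have : horner_mx T ('X^p - 1) = 0.
  apply/mxminpoly_minP; apply: dvdp_trans (prim_root_cubic_dvdp p_gt2 z_prim).
  exact/mxminpoly_minP/mx3_fix1_annihilated.
by rewrite rmorphB rmorphXn rmorph1 /= horner_mx_X => /eqP; rewrite subr_eq0 => /eqP.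
Qed.

Lemma mx3_fix1_eigenvector : exists2 v : 'rV[C]_3, v != 0 & v *m T = z *: v.
Proof.
have d_eq : d = z + z^-1 - a by rewrite -trace_ad; ring.
have bc_eq : c * b = a * (z + z^-1 - a) - 1 by rewrite -d_eq -det_ad; ring.
have zV : z * z^-1 = 1 by rewrite mulfV.
have [/andP[/eqP c0 /eqP za]|c_or_za] := boolP ((c == 0) && (z == a)).
  exists (row3 0 (z - d) b).
    have -> : z - d = z - z^-1 by rewrite d_eq -za; ring.
    by rewrite row3_eq0 eqxx subr_eq0 (negbTE (prim_root_neq_inv p_gt2 z_prim)).
  by rewrite row3_mul_mx3 row3_scale c0 -za d_eq; congr row3; ring.
exists (row3 0 c (z - a)).
  by rewrite row3_eq0 subr_eq0 eqxx.
rewrite row3_mul_mx3 row3_scale bc_eq; congr row3; rewrite ?d_eq; try ring.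
by rewrite -zV; ring.
Qed.

Lemma has_order_mx3_fix1 : has_order T p.
Proof.
split; first exact: ltn_trans p_gt2.
split; first exact: mx3_fix1_expr_order.
move=> k /andP[k_gt0 k_lt_p] Tk.
have [v v_neq0 vT] := mx3_fix1_eigenvector.
have := dvdn_leq k_gt0 (eigenvector_prim_root_dvd v_neq0 vT z_prim Tk).
by rewrite leqNgt k_lt_p.
Qed.

End OrderFix1.

Lemma has_order_mx3 (C : numClosedFieldType) (z : C) (p : nat) x00 u1 u2 x10 a b x20 c d :
  (2 < p)%N -> p.-primitive_root z -> x00 = 1 -> x10 = 0 -> x20 = 0 ->
  a + d = z + z^-1 -> a * d - b * c = 1 -> has_order (mx3 x00 u1 u2 x10 a b x20 c d) p.
Proof. by move=> p_gt2 z_prim -> -> ->; exact: has_order_mx3_fix1. Qed.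

Lemma intertwine_exp (R : pzRingType) (n : nat) (X Y B : 'M[R]_n) (k : nat) :
  X *m B = B *m Y -> X ^+ k *m B = B *m Y ^+ k.
Proof.
move=> XB; elim: k => [|k IHk]; first by rewrite !expr0 mul1mx mulmx1.
by rewrite !exprS -!mulmxE -mulmxA IHk !mulmxA XB.
Qed.

Lemma has_order_conj (C : numClosedFieldType) (X Y B : 'M[C]_3) (p : nat) :
  B \in unitmx -> X *m B = B *m Y -> has_order Y p -> has_order X p.
Proof.
move=> B_unit XB [p_gt0 [Yp Yk]].
have XkB k := intertwine_exp k XB.
split => //; split.
  by rewrite -[X ^+ p](mulmxK B_unit) XkB Yp mulmx1 mulmxV.
move=> k k_bounds Xk; apply: (Yk k k_bounds).
by rewrite -[Y ^+ k](mulKmx B_unit) -XkB Xk mul1mx mulVmx.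
Qed.

(* ring and field ignore hypotheses: an equation P = Q is used by closing
   E - F = k * (P - Q) for a suitable k. *)
Lemma eq_from_relation (R : comPzRingType) (E F P Q k : R) :
  P = Q -> E - F = k * (P - Q) -> E = F.
Proof. by move=> -> EF; apply/eqP; rewrite -subr_eq0 EF subrr mulr0. Qed.

Section ChangeOfBasis.
Variables (C : numClosedFieldType) (alpha beta gamma l m : C).
Hypotheses (lm : l * m = gamma) (gamma_neq4 : 4 - gamma != 0).
Hypothesis Delta0 : alpha * (l + 2) + beta * (m + 2) = 2 * (4 - gamma).

Let g := 4 - gamma.

(* Columns b, a2, a3: a basis adapted to the fixed line Kb. *)
Definition basis_mx := mx3 (4 - gamma) 0 0 (l + 2) 1 0 (m + 2) 0 1.

Lemma basis_mx_unit : basis_mx \in unitmx.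
Proof.
pose Binv := mx3 g^-1 0 0 (- (l + 2) / g) 1 0 (- (m + 2) / g) 0 1.
have [] // := @mulmx1_unit _ _ basis_mx Binv.
by rewrite mx3_mul mx3_scalar /g; congr mx3; field.
Qed.

Lemma refl1_basis : refl1 alpha beta *m basis_mx = basis_mx *m
  mx3 1 (alpha / g) (beta / g)
      0 (1 - alpha * (l + 2) / g) (- beta * (l + 2) / g)
      0 (- alpha * (m + 2) / g) (1 - beta * (m + 2) / g).
Proof.
rewrite /refl1 /basis_mx /a1 vec3_mul_row3 mx3_scalar mx3_opp mx3_add !mx3_mul.
congr mx3; rewrite /g; try by field.
by apply: (eq_from_relation (k := 1) Delta0); ring.
Qed.

Lemma refl2_basis : refl2 l *m basis_mx = basis_mx *m mx3 1 0 0 0 (-1) l 0 0 1.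
Proof.
rewrite /refl2 /basis_mx /a2 vec3_mul_row3 mx3_scalar mx3_opp mx3_add !mx3_mul -lm.
by congr mx3; ring.
Qed.

Lemma refl3_basis : refl3 m *m basis_mx = basis_mx *m mx3 1 0 0 0 1 0 0 m (-1).
Proof.
rewrite /refl3 /basis_mx /a3 vec3_mul_row3 mx3_scalar mx3_opp mx3_add !mx3_mul -lm.
by congr mx3; ring.
Qed.

Lemma corresponds_basis (nu : 'M[C]_3) (v : C * C) : corresponds gamma l m nu v ->
  nu *m basis_mx = basis_mx *m mx3 1 v.1 v.2 0 1 0 0 0 1.
Proof.
case=> nu_b nu_a2 nu_a3; rewrite [in LHS]/basis_mx mx3_cols !mulmxDr !mulmxA.
rewrite (_ : vec3 _ _ _ = bvec gamma l m) // nu_b.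
rewrite (_ : vec3 0 1 0 = a2 C) // nu_a2 (_ : vec3 0 0 1 = a3 C) // nu_a3.
rewrite /bvec /a2 /a3 /basis_mx !vec3_scale !vec3_add !vec3_mul_row3 !mx3_add mx3_mul.
by congr mx3; ring.
Qed.

Lemma has_order_basis_prod (R1 R2 nu1 nu2 S1 S2 : 'M[C]_3) (v1 v2 : C * C) p :
  R1 *m basis_mx = basis_mx *m S1 -> R2 *m basis_mx = basis_mx *m S2 ->
  corresponds gamma l m nu1 v1 -> corresponds gamma l m nu2 v2 ->
  has_order (S1 *m mx3 1 v1.1 v1.2 0 1 0 0 0 1 *m (S2 *m mx3 1 v2.1 v2.2 0 1 0 0 0 1)) p ->
  has_order (R1 *m nu1 *m (R2 *m nu2)) p.
Proof.
move=> R1B R2B /corresponds_basis nu1B /corresponds_basis nu2B.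
apply: has_order_conj basis_mx_unit _.
rewrite -!mulmxA nu2B (mulmxA R2) R2B -mulmxA (mulmxA nu1) nu1B -mulmxA.
by rewrite (mulmxA R1) R1B !mulmxA.
Qed.

Lemma has_order_refl12 z p nu1 nu2 v1 v2 :
  (2 < p)%N -> p.-primitive_root z -> alpha = z + z^-1 + 2 ->
  corresponds gamma l m nu1 v1 -> corresponds gamma l m nu2 v2 ->
  has_order (refl1 alpha beta *m nu1 *m (refl2 l *m nu2)) p.
Proof.
move=> p_gt2 z_prim alpha_z c1 c2.
apply: has_order_basis_prod refl1_basis refl2_basis c1 c2 _.
have zz : z + z^-1 = alpha - 2 by rewrite alpha_z; ring.
move: gamma_neq4 Delta0; rewrite /g -lm => lm_neq4 Delta0'.
rewrite !mx3_mul; apply: (@has_order_mx3 _ z p) => //; rewrite ?zz; try by field.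
  by apply: (eq_from_relation (k := - 1 / (4 - l * m)) Delta0'); field.
by apply: (eq_from_relation (k := 1 / (4 - l * m)) Delta0'); field.
Qed.

Lemma has_order_refl13 z p nu1 nu3 v1 v3 :
  (2 < p)%N -> p.-primitive_root z -> beta = z + z^-1 + 2 ->
  corresponds gamma l m nu1 v1 -> corresponds gamma l m nu3 v3 ->
  has_order (refl1 alpha beta *m nu1 *m (refl3 m *m nu3)) p.
Proof.
move=> p_gt2 z_prim beta_z c1 c3.
apply: has_order_basis_prod refl1_basis refl3_basis c1 c3 _.
have zz : z + z^-1 = beta - 2 by rewrite beta_z; ring.
move: gamma_neq4 Delta0; rewrite /g -lm => lm_neq4 Delta0'.
rewrite !mx3_mul; apply: (@has_order_mx3 _ z p) => //; rewrite ?zz; try by field.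
  by apply: (eq_from_relation (k := - 1 / (4 - l * m)) Delta0'); field.
by apply: (eq_from_relation (k := 1 / (4 - l * m)) Delta0'); field.
Qed.

Lemma has_order_refl23 z p nu2 nu3 v2 v3 :
  (2 < p)%N -> p.-primitive_root z -> gamma = z + z^-1 + 2 ->
  corresponds gamma l m nu2 v2 -> corresponds gamma l m nu3 v3 ->
  has_order (refl2 l *m nu2 *m (refl3 m *m nu3)) p.
Proof.
move=> p_gt2 z_prim gamma_z c2 c3.
apply: has_order_basis_prod refl2_basis refl3_basis c2 c3 _.
have zz : z + z^-1 = l * m - 2 by rewrite lm gamma_z; ring.
by rewrite !mx3_mul; apply: (@has_order_mx3 _ z p) => //; rewrite ?zz; ring.
Qed.

End ChangeOfBasis.

Lemma prim_root_add_inv_neq2 (F : fieldType) (z : F) (p : nat) :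
  (1 < p)%N -> p.-primitive_root z -> z + z^-1 != 2.
Proof.
move=> p_gt1 z_prim; apply: contra (prim_root_neq1 p_gt1 z_prim) => /eqP z_sum.
have z_neq0 : z != 0 by rewrite (prim_root_eq0 z_prim) gtn_eqF // ltnW.
have /eqP : (z - 1) ^+ 2 = z * (z + z^-1 - 2) by field.
by rewrite z_sum subrr mulr0 sqrf_eq0 subr_eq0.
Qed.

Lemma four_cos2_prim_root (C : numClosedFieldType) (k p : nat) : (2 < p)%N -> coprime k p ->
  exists2 z : C, p.-primitive_root z & four_cos2 C k p = z + z^-1 + 2.
Proof.
move=> p_gt2 kp_coprime; have p_gt1 := ltnW p_gt2.
have w_prim := prim_rootN1 C p_gt1.
have w2_prim : p.-primitive_root (p.-root (-1 : C) ^+ 2).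
  by have := dvdn_prim_root w_prim (dvdn_mull 2 (dvdnn p)); rewrite mulnK // ltnW.
exists (p.-root (-1) ^+ 2 ^+ k); first by rewrite prim_root_exp_coprime.
have wk_neq0 : p.-root (-1 : C) ^+ k != 0.
  by rewrite expf_neq0 // (prim_root_eq0 w_prim) muln_eq0 negb_or -!lt0n (ltnW p_gt1).
rewrite /four_cos2 -exprM mulnC exprM; move: (p.-root (-1) ^+ k) wk_neq0 => u u_neq0.
by field.
Qed.

Theorem corollary1 (C : numClosedFieldType) (p q r k1 k2 k3 : nat)
  (hp : (3 <= p)%N) (hq : (3 <= q)%N) (hr : (3 <= r)%N)
  (hk1 : coprime k1 p) (hk2 : coprime k2 q) (hk3 : coprime k3 r)
  (l m : C) :
  let alpha := four_cos2 C k1 p in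
  let beta := four_cos2 C k2 q in
  let gamma := four_cos2 C k3 r in
  l * m = gamma ->
  Delta alpha beta gamma l m = 0 ->
  forall (lam1 lam2 lam3 : C) (nu1 nu2 nu3 : 'M[C]_3),
  in_N alpha beta gamma l m nu1 (scal2 lam1 (alpha, beta)) ->
  in_N alpha beta gamma l m nu2 (scal2 lam2 (-2, l)) ->
  in_N alpha beta gamma l m nu3 (scal2 lam3 (m, -2)) ->
  let s1' := refl1 alpha beta *m nu1 in
  let s2' := refl2 l *m nu2 in
  let s3' := refl3 m *m nu3 in
  [/\ has_order (s1' *m s2') p, has_order (s1' *m s3') q & has_order (s2' *m s3') r].
Proof.
move=> alpha beta gamma lm Delta0 lam1 lam2 lam3 nu1 nu2 nu3 [_ c1] [_ c2] [_ c3] s1' s2' s3'.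
have [z1 z1_prim alpha_z] : exists2 z, p.-primitive_root z & alpha = z + z^-1 + 2.
  exact: four_cos2_prim_root.
have [z2 z2_prim beta_z] : exists2 z, q.-primitive_root z & beta = z + z^-1 + 2.
  exact: four_cos2_prim_root.
have [z3 z3_prim gamma_z] : exists2 z, r.-primitive_root z & gamma = z + z^-1 + 2.
  exact: four_cos2_prim_root.
have gamma_neq4 : 4 - gamma != 0.
  apply: contra (prim_root_add_inv_neq2 (ltnW hr) z3_prim) => /eqP gamma4.
  by apply/eqP/(eq_from_relation (k := -1) gamma4); rewrite gamma_z; ring.
have Delta0_rel : alpha * (l + 2) + beta * (m + 2) = 2 * (4 - gamma).
  by apply: (eq_from_relation (k := -1) Delta0); rewrite /Delta; ring.
split.
- exact (has_order_refl12 lm gamma_neq4 Delta0_rel hp z1_prim alpha_z c1 c2).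
- exact (has_order_refl13 lm gamma_neq4 Delta0_rel hq z2_prim beta_z c1 c3).
- exact (has_order_refl23 lm gamma_neq4 hr z3_prim gamma_z c2 c3).
Qed.
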